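(* The graphs $M_2$ and $M_3$ are not in $B_0$.
   Context: $M_2$ is the graph on vertices $a,b,c,d,e,f,g$ with edges $ab,ac,ad,be,cf,dg$. $M_3$ is the graph on vertices $a,b,c,d,e,f$ with edges $ab,ac,bc,ad,be,cf$. $B_0$ is the class of graphs having an EPG representation (a set of paths on a rectangular grid, one per vertex, two vertices adjacent iff their paths share a grid edge) in which no path has a bend, i.e. each path lies on a single grid line. *)

From mathcomp Require Import all_boot.
From Stdlib Require Import ZArith.

Set Implicit Arguments.
Unset Strict Implicit.
Unset Printing Implicit Defensive.

(* A grid edge of the integer grid Z x Z:
   [GEdge true x y]  is the horizontal unit segment (x,y)--(x+1,y),
   [GEdge false x y] is the vertical unit segment   (x,y)--(x,y+1). *)
Record gedge := GEdge { ge_horiz : bool; ge_x : Z; ge_y : Z }.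

(* A path with no bend: a segment of a single grid line consisting of at least
   one grid edge.  If [p_horiz], it lies on the horizontal line y = p_line and
   runs from (p_lo, p_line) to (p_hi, p_line); otherwise it lies on the
   vertical line x = p_line and runs from (p_line, p_lo) to (p_line, p_hi). *)
Record path0 := Path0 {
  p_horiz : bool; p_line : Z; p_lo : Z; p_hi : Z; p_nonempty : (p_lo < p_hi)%Z }.

Definition on_path (p : path0) (g : gedge) : Prop :=
  ge_horiz g = p_horiz p /\
  if p_horiz p
  then ge_y g = p_line p /\ (p_lo p <= ge_x g < p_hi p)%Z
  else ge_x g = p_line p /\ (p_lo p <= ge_y g < p_hi p)%Z.

Definition share_edge (p q : path0) : Prop :=
  exists g : gedge, on_path p g /\ on_path q g.

(* A graph (vertex type V, adjacency relation adj) is in B_0 if it has an EPG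
   representation in which no path has a bend. *)
Definition B0 (V : finType) (adj : rel V) : Prop :=
  exists P : V -> path0,
    forall u v : V, u != v -> (adj u v <-> share_edge (P u) (P v)).

Definition graph_of_edges (n : nat) (es : seq (nat * nat)) : rel 'I_n :=
  fun u v => ((nat_of_ord u, nat_of_ord v) \in es) || ((nat_of_ord v, nat_of_ord u) \in es).

(* M_2: vertices a,b,c,d,e,f,g = 0,...,6; edges ab,ac,ad,be,cf,dg. *)
Definition M2 : rel 'I_7 :=
  @graph_of_edges 7 [:: (0,1); (0,2); (0,3); (1,4); (2,5); (3,6)].

(* M_3: vertices a,b,c,d,e,f = 0,...,5; edges ab,ac,bc,ad,be,cf. *)
Definition M3 : rel 'I_6 :=
  @graph_of_edges 6 [:: (0,1); (0,2); (1,2); (0,3); (1,4); (2,5)].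

(** A bend-free representation places every connected graph on a single grid
    line, as an interval graph of open intervals.  Three pairwise disjoint
    intervals on a line are ordered, so one of them, [z], lies between the
    other two; a walk between those two whose intervals never meet [z] cannot
    cross it.  Hence a graph in B_0 has no asteroidal triple, while the leaves
    [e, f, g] of M_2 and the pendant vertices [d, e, f] of M_3 are asteroidal
    triples. *)
From mathcomp Require Import all_boot.
From Stdlib Require Import ZArith Lia.

Set Implicit Arguments.
Unset Strict Implicit.
Unset Printing Implicit Defensive.

Definition line (p : path0) : bool * Z := (p_horiz p, p_line p).

Definition left_of (p q : path0) : bool := (p_hi p <=? p_lo q)%Z.

Lemma disjoint3_separated p q r :
  left_of p q || left_of q p -> left_of q r || left_of r q -> left_of r p || left_of p r ->
  [|| left_of p r != left_of q r, left_of q p != left_of r p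
    | left_of r q != left_of p q].
Proof.
have := p_nonempty p; have := p_nonempty q; have := p_nonempty r; rewrite /left_of.
by repeat (case: Z.leb_spec => //=); lia.
Qed.

Lemma share_edgeP p q :
  share_edge p q <-> line p = line q /\ (p_lo p < p_hi q)%Z /\ (p_lo q < p_hi p)%Z.
Proof.
split.
- case=> [[h x y]] [[/= hp onp] [/= hq onq]].
  move: onp onq; rewrite /line -hp -hq.
  by case: h {hp hq} => -[-> ?] [-> ?]; split=> //; lia.
- case=> -[hpq lpq] ov; have := p_nonempty p; have := p_nonempty q => nq np.
  exists (GEdge (p_horiz p) (if p_horiz p then Z.max (p_lo p) (p_lo q) else p_line p)
                (if p_horiz p then p_line p else Z.max (p_lo p) (p_lo q))).
  by rewrite /on_path /= -hpq -lpq; case: (p_horiz p); split; split=> //; lia.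
Qed.

Section Representation.

Variables (V : finType) (adj : rel V) (P : V -> path0).
Hypothesis repP : forall u v : V, u != v -> (adj u v <-> share_edge (P u) (P v)).

Lemma adj_line u v : adj u v -> line (P u) = line (P v).
Proof.
have [-> //|nuv] := eqVneq u v.
by move/(repP nuv)/share_edgeP => [].
Qed.

Lemma nadj_disjoint u v : u != v -> ~~ adj u v -> line (P u) = line (P v) ->
  left_of (P u) (P v) || left_of (P v) (P u).
Proof.
move=> nuv /negP nadj luv; rewrite /left_of; apply/orP.
case: (Z.lt_ge_cases (p_lo (P v)) (p_hi (P u))) => [h1|]; last by left; apply/Z.leb_le.
case: (Z.lt_ge_cases (p_lo (P u)) (p_hi (P v))) => [h2|]; last by right; apply/Z.leb_le.
by case: nadj; apply/repP/share_edgeP.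
Qed.

Definition avoids (z w : V) : bool := (w != z) && ~~ adj w z.

Lemma avoids_adj_left_of z u v : avoids z u -> avoids z v -> adj u v ->
  line (P u) = line (P z) -> left_of (P u) (P z) = left_of (P v) (P z).
Proof.
move=> /andP[nuz nauz] /andP[nvz navz] auv luz.
have lvz : line (P v) = line (P z) by rewrite -(adj_line auv).
have [-> //|nuv] := eqVneq u v.
move/(repP nuv)/share_edgeP: auv => [_ ov].
have := nadj_disjoint nuz nauz luz; have := nadj_disjoint nvz navz lvz.
have := p_nonempty (P u); have := p_nonempty (P v); have := p_nonempty (P z).
rewrite /left_of.
by repeat (case: Z.leb_spec => //=); lia.
Qed.

Definition avoiding_walk (z x y : V) : Prop :=
  exists s : seq V, [&& path adj x s, last x s == y & all (avoids z) (x :: s)].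

Lemma avoiding_walk_line_side z x y : avoiding_walk z x y ->
  line (P x) = line (P y) /\
  (line (P x) = line (P z) -> left_of (P x) (P z) = left_of (P y) (P z)).
Proof.
case=> s /and3P[+ /eqP <-].
elim: s x => [//|w s IHs] x /andP[axw pw] /andP[azx azs].
have [lw sw] := IHs w pw azs; have /andP[azw _] := azs.
have lxw := adj_line axw; split; first by rewrite lxw.
move=> lxz; rewrite (avoids_adj_left_of azx azw axw lxz).
by apply: sw; rewrite -lxw.
Qed.

End Representation.

Definition asteroidal_triple (V : finType) (adj : rel V) (x y z : V) : Prop :=
  [/\ avoiding_walk adj z x y, avoiding_walk adj x y z & avoiding_walk adj y z x].

Lemma avoiding_walk_avoids (V : finType) (adj : rel V) z x y :
  avoiding_walk adj z x y -> avoids adj z x && avoids adj z y.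
Proof.
case=> s /and3P[_ /eqP <- azs].
by rewrite (allP azs x (mem_head _ _)) (allP azs _ (mem_last _ _)).
Qed.

Theorem B0_no_asteroidal_triple (V : finType) (adj : rel V) x y z :
  asteroidal_triple adj x y z -> ~ B0 adj.
Proof.
case=> wxy wyz wzx [P repP].
have [lxy sxy] := avoiding_walk_line_side repP wxy.
have [lyz syz] := avoiding_walk_line_side repP wyz.
have [lzx szx] := avoiding_walk_line_side repP wzx.
move: (avoiding_walk_avoids wxy) (avoiding_walk_avoids wyz) (avoiding_walk_avoids wzx).
move=> /andP[/andP[nxz axz] _] /andP[/andP[nyx ayx] _] /andP[/andP[nzy azy] _].
have := disjoint3_separated (nadj_disjoint repP nxz axz (esym lzx))
  (nadj_disjoint repP nzy azy (esym lyz)) (nadj_disjoint repP nyx ayx (esym lxy)).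
by rewrite (sxy (esym lzx)) (syz (esym lxy)) (szx (esym lyz)) !eqxx.
Qed.

Theorem lemma5p5 : ~ B0 M2 /\ ~ B0 M3.
Proof.
split.
- pose a := @Ordinal 7 0 isT; pose b := @Ordinal 7 1 isT; pose c := @Ordinal 7 2 isT.
  pose d := @Ordinal 7 3 isT; pose e := @Ordinal 7 4 isT; pose f := @Ordinal 7 5 isT.
  pose g := @Ordinal 7 6 isT.
  apply: (@B0_no_asteroidal_triple _ _ e f g); split.
  + by exists [:: b; a; c; f].
  + by exists [:: c; a; d; g].
  + by exists [:: d; a; b; e].
- pose a := @Ordinal 6 0 isT; pose b := @Ordinal 6 1 isT; pose c := @Ordinal 6 2 isT.
  pose d := @Ordinal 6 3 isT; pose e := @Ordinal 6 4 isT; pose f := @Ordinal 6 5 isT.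
  apply: (@B0_no_asteroidal_triple _ _ d e f); split.
  + by exists [:: a; b; e].
  + by exists [:: b; c; f].
  + by exists [:: c; a; d].
Qed.
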